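(* Let $S$ be a finite set and $\mathcal{C}\subseteq 2^S$, and let $A_{\mathcal{C}}=\{2^X\mid X\in\mathcal{D}\}$, where $\mathcal{D}=\{Y\subseteq S\mid\exists X\in\mathcal{C},\ Y\subseteq X\}$ is the downset generated by $\mathcal{C}$ and $2^X=\{Y\subseteq S\mid Y\subseteq X\}$. Then $\mathcal{C}\in\bullet(A_{\mathcal{C}})$.
   Context: For sets $A,B$, the disjoint union $A\,\dot\cup\,B=A\cup B$ is defined only when $A\cap B=\emptyset$, and the subset complement $A\,\dot\setminus\,B=A\setminus B$ is defined only when $B\subseteq A$. For a finite family $\mathcal{G}$ of sets, $\bullet(\mathcal{G})$ is the smallest family of sets containing $\emptyset$ and every member of $\mathcal{G}$ and closed under all well-defined disjoint unions and subset complements. Here members of $\mathcal{G}$ are subsets of $2^S$. *)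

From mathcomp Require Import all_boot.
Set Implicit Arguments. Unset Strict Implicit. Unset Printing Implicit Defensive.

Inductive bullet (S : finType) (G : {set {set {set S}}}) : {set {set S}} -> Prop :=
| bullet_empty : bullet G set0
| bullet_gen A : A \in G -> bullet G A
| bullet_dunion A B : bullet G A -> bullet G B -> [disjoint A & B] ->
    bullet G (A :|: B)
| bullet_sdiff A B : bullet G A -> bullet G B -> B \subset A ->
    bullet G (A :\: B).

Definition downset (S : finType) (C : {set {set S}}) : {set {set S}} :=
  [set Y : {set S} | [exists X in C, Y \subset X]].

Definition A_fam (S : finType) (C : {set {set S}}) : {set {set {set S}}} :=
  [set powerset X | X in downset C].

From mathcomp Require Import all_boot.

(* For X below a member of C, every 2^Y with Y \subset X is a generator.  By
   induction on |X|, {X} = 2^X \ (2^X \ {X}) is then in bullet, since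
   2^X \ {X} is the disjoint union of the singletons {Y} of the proper subsets
   Y of X.  Finally C is the disjoint union of its singletons. *)

Section Bullet.

Variables (S : finType) (G : {set {set {set S}}}).

Lemma bullet_set_seq (s : seq {set S}) :
  uniq s -> (forall Y, Y \in s -> bullet G [set Y]) -> bullet G [set:: s].
Proof.
elim: s => [|Y s IHs] /=; first by rewrite set_nil; constructor.
case/andP=> Y_notin_s s_uniq sing_s; rewrite set_cons.
apply: bullet_dunion; first exact: sing_s (mem_head Y s).
- by apply: IHs => // Z Zs; apply: sing_s; rewrite inE Zs orbT.
- by rewrite disjoints1 inE.
Qed.

Lemma bullet_of_singletons (F : {set {set S}}) :
  (forall Y, Y \in F -> bullet G [set Y]) -> bullet G F.
Proof.
move=> sing_F; rewrite -[F]set_enum.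
by apply: bullet_set_seq (enum_uniq F) _ => Y; rewrite mem_enum; apply: sing_F.
Qed.

Lemma bullet_set1 (X : {set S}) :
  (forall Y : {set S}, Y \subset X -> powerset Y \in G) -> bullet G [set X].
Proof.
have [n] := ubnP #|X|; elim: n X => // n IHn X X_small powG.
have -> : [set X] = powerset X :\: (powerset X :\ X).
  by apply/setP=> Y; rewrite !inE; case: eqP => [->|]; rewrite ?subxx ?andNb.
apply: bullet_sdiff; [exact/bullet_gen/powG | | exact: subD1set].
apply: bullet_of_singletons => Y /setD1P [YneX]; rewrite powersetE => YsubX.
have YproperX : Y \proper X by rewrite properEneq YneX YsubX.
apply: IHn => [|Z ZsubY]; first exact: leq_trans (proper_card YproperX) X_small.
exact/powG/(subset_trans ZsubY).
Qed.

End Bullet.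

Lemma mem_downset (S : finType) (C : {set {set S}}) (X Y : {set S}) :
  Y \subset X -> X \in C -> Y \in downset C.
Proof. by move=> YsubX XC; rewrite inE; apply/existsP; exists X; rewrite XC. Qed.

Theorem lemma5p7 (S : finType) (C : {set {set S}}) : bullet (A_fam C) C.
Proof.
apply: bullet_of_singletons => X XC; apply: bullet_set1 => Y YsubX.
by apply/imsetP; exists Y; first exact: mem_downset YsubX XC.
Qed.
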